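(* Let $V$ be a set of $n$ points in $\mathbb{R}^2$, $O\in\mathbb{R}^2$, and $M,k$ positive integers. Sort $V$ as $u_1,\dots,u_n$ with $\theta(u_1)\le\cdots\le\theta(u_n)$, and for $1\le i\le\lceil n/(Mk)\rceil$ let $V_i=\{u_j:(i-1)Mk<j\le iMk\}$. Define $Y_i$ as follows: if $\max_{v\in V_i}\theta(v)-\min_{v\in V_i}\theta(v)\le\pi$, let $Y_i$ be the interior of the convex hull of $V_i\cup\{O\}$; otherwise let $Y_i$ be the exterior of the convex hull of $(V\setminus V_i)\cup\{O\}$. Then for any $1\le i<j\le\lceil n/(Mk)\rceil$, the sets $Y_i$ and $Y_j$ do not intersect.
   Context: $\theta(v)\in[0,2\pi)$ denotes the polar angle of the point $v$ with respect to $O$. *)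

From HB Require Import structures.
From mathcomp Require Import all_boot all_order all_algebra.
From mathcomp Require Import all_classical all_reals all_analysis.
Set Implicit Arguments. Unset Strict Implicit. Unset Printing Implicit Defensive.
Import Order.TTheory GRing.Theory Num.Theory.
Import numFieldNormedType.Exports.
Local Open Scope classical_set_scope.
Local Open Scope ring_scope.

Notation point R := 'rV[R]_2.

Definition px {R : realType} (v : point R) : R := v ord0 ord0.
Definition py {R : realType} (v : point R) : R := v ord0 ord_max.

(* polar angle of v with respect to O, in [0, 2 pi); convention theta O v = 0 if v = O *)
Definition theta {R : realType} (O v : point R) : R :=
  let x := px v - px O in
  let y := py v - py O in
  let r := Num.sqrt (x ^+ 2 + y ^+ 2) in
  if r == 0 then 0
  else if 0 <= y then acos (x / r) else 2 * pi - acos (x / r).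

Definition convex_hull {R : realType} (A : set (point R)) : set (point R) :=
  [set x | exists (m : nat) (p : 'I_m -> point R) (l : 'I_m -> R),
     (forall i, A (p i)) /\ (forall i, 0 <= l i) /\
     \sum_(i < m) l i = 1 /\ x = \sum_(i < m) l i *: p i].

Definition exterior {T : topologicalType} (A : set T) : set T := interior (~` A).

(* the i-th block (1-indexed) of size d of the sorted sequence s *)
Definition block {T : Type} (d i : nat) (s : seq T) : seq T :=
  take d (drop ((i - 1) * d) s).

Definition max_theta {R : realType} (O : point R) (B : seq (point R)) : R :=
  \big[Order.max/0]_(v <- B) theta O v.
Definition min_theta {R : realType} (O : point R) (B : seq (point R)) : R :=
  \big[Order.min/(2 * pi)]_(v <- B) theta O v.

(* the region Y_i, for V (given as its theta-sorted enumeration s) and block size d = M k *)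
Definition Yset {R : realType} (O : point R) (s : seq (point R)) (d i : nat)
  : set (point R) :=
  let Vi := block d i s in
  if max_theta O Vi - min_theta O Vi <= pi
  then interior (convex_hull ([set v | v \in Vi] `|` [set O]))
  else exterior (convex_hull (([set v | v \in s] `\` [set v | v \in Vi]) `|` [set O])).

From HB Require Import structures.
From mathcomp Require Import all_boot all_order all_algebra.
From mathcomp Require Import all_classical all_reals all_analysis.
From mathcomp Require Import ring lra zify.
Import Order.TTheory GRing.Theory Num.Theory.
Import numFieldNormedType.Exports.
Set Implicit Arguments. Unset Strict Implicit.
Local Open Scope classical_set_scope.
Local Open Scope ring_scope.

(* The blocks V_i are consecutive in angular order around O.  A block of
   angular spread at most pi lies in a closed half-plane bounded by a line
   through O, and two such blocks, being angularly ordered, can be put on the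
   two sides of one line through O, which separates the interiors of their
   hulls.  If exactly one of the blocks has spread larger than pi, its region
   is the exterior of a hull containing the other block.  Finally two blocks
   cannot both have spread larger than pi, since their angles lie in two
   consecutive subintervals of [0, 2 pi]. *)

Section Polar.
Variable R : realType.
Implicit Types O v : 'rV[R]_2.

Lemma ratio_sqrt_bound (x y : R) : -1 <= x / Num.sqrt (x ^+ 2 + y ^+ 2) <= 1.
Proof.
rewrite -ler_norml normrM normfV (ger0_norm (sqrtr_ge0 _)).
have [->|r_neq0] := eqVneq (Num.sqrt (x ^+ 2 + y ^+ 2)) 0; first by rewrite invr0 mulr0.
rewrite ler_pdivrMr ?lt_def ?r_neq0 ?sqrtr_ge0 // mul1r -sqrtr_sqr.
by rewrite ler_sqrt ?addr_ge0 ?sqr_ge0 // lerDl sqr_ge0.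
Qed.

Lemma sqrt_mul_sin_acos (x y : R) :
  Num.sqrt (x ^+ 2 + y ^+ 2) * sin (acos (x / Num.sqrt (x ^+ 2 + y ^+ 2))) = `|y|.
Proof.
set r := Num.sqrt _.
have r2 : r ^+ 2 = x ^+ 2 + y ^+ 2 by rewrite sqr_sqrtr // addr_ge0 // sqr_ge0.
have [r0|r_neq0] := eqVneq r 0.
  by rewrite r0 mul0r; apply/esym/eqP; rewrite normr_eq0 -sqrf_eq0; apply/eqP; nra.
have rE : r = Num.sqrt (r ^+ 2) by rewrite sqrtr_sqr ger0_norm ?sqrtr_ge0.
rewrite sin_acos ?ratio_sqrt_bound // {1}rE -sqrtrM ?sqr_ge0 // -sqrtr_sqr.
congr Num.sqrt.
by rewrite mulrBr mulr1 expr_div_n mulrCA mulfV ?expf_neq0 // mulr1 r2; ring.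
Qed.

Lemma theta_polar O v : exists2 r : R, 0 <= r &
  px v - px O = r * cos (theta O v) /\ py v - py O = r * sin (theta O v).
Proof.
rewrite /theta; set x := px v - px O; set y := py v - py O.
move: (sqrt_mul_sin_acos x y) (acos_def (ratio_sqrt_bound x y)).
set r := Num.sqrt _ => sinA [_ cosA]; exists r; first exact: sqrtr_ge0.
have r2 : r ^+ 2 = x ^+ 2 + y ^+ 2 by rewrite sqr_sqrtr // addr_ge0 // sqr_ge0.
have [r0|r_neq0] := eqVneq r 0.
  by rewrite r0 !mul0r; split; nra.
have xE : x = r * (x / r) by rewrite mulrCA mulfV // mulr1.
case: ifP => y_ge0; first by rewrite cosA -xE sinA ger0_norm.
rewrite cosB sinB mulr_natl sin2pi cos2pi cosA !mul1r mul0r addr0 -xE.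
by rewrite mul0r sub0r mulrN sinA ltr0_norm ?opprK ?ltNge ?y_ge0.
Qed.

Lemma theta_bounds O v : 0 <= theta O v <= 2 * pi.
Proof.
rewrite /theta; set x := px v - px O; set y := py v - py O.
have := acos_ge0 (ratio_sqrt_bound x y); have := acos_lepi (ratio_sqrt_bound x y).
have := pi_gt0 R => pi_gt0 acos_le acos_ge.
by case: ifP => _; last case: ifP => _; apply/andP; split; lra.
Qed.

End Polar.

Section HalfPlanes.
Variable R : realType.
Implicit Types (O v x : 'rV[R]_2) (c : R) (A B : set 'rV[R]_2).

(* Signed distance from v to the line through O of direction angle c,
   positive on its left. *)
Definition side O c v := (py v - py O) * cos c - (px v - px O) * sin c.

Lemma side_polar O c v : exists2 r, 0 <= r & side O c v = r * sin (theta O v - c).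
Proof.
have [r r_ge0 [xE yE]] := theta_polar O v.
by exists r => //; rewrite /side xE yE sinB; ring.
Qed.

Lemma side_ge0 O c v : 0 <= theta O v - c <= pi -> 0 <= side O c v.
Proof.
move=> /sin_ge0_pi sin_ge0.
by have [r r_ge0 ->] := side_polar O c v; rewrite mulr_ge0.
Qed.

Lemma sideDpi O c v : side O (c + pi) v = - side O c v.
Proof. by rewrite /side sinDpi cosDpi; ring. Qed.

Lemma side_convex_comb O c m (p : 'I_m -> 'rV[R]_2) (l : 'I_m -> R) :
  \sum_(i < m) l i = 1 ->
  side O c (\sum_(i < m) l i *: p i) = \sum_(i < m) l i * side O c (p i).
Proof.
move=> l_sum1.
have coord j : (\sum_(i < m) l i *: p i) ord0 j = \sum_(i < m) l i * p i ord0 j.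
  by rewrite summxE; apply: eq_bigr => i _; rewrite mxE.
have -> : \sum_(i < m) l i * side O c (p i) =
    (\sum_(i < m) l i * py (p i)) * cos c - (\sum_(i < m) l i * px (p i)) * sin c
    - (\sum_(i < m) l i) * (py O * cos c - px O * sin c).
  by rewrite !mulr_suml -!sumrB; apply: eq_bigr => i _; rewrite /side; ring.
by rewrite l_sum1 /side /px /py !coord; ring.
Qed.

Lemma convex_hullS A B : A `<=` B -> convex_hull A `<=` convex_hull B.
Proof. by move=> AB x [m [p [l [Ap l_convex]]]]; exists m, p, l; split => // i; apply: AB. Qed.

Lemma convex_hull_side_ge0 O c A : (forall v, A v -> 0 <= side O c v) ->
  convex_hull (A `|` [set O]) `<=` [set x | 0 <= side O c x].
Proof.
move=> A_ge0 x [m [p [l [Ap [l_ge0 [l_sum1 ->]]]]]] /=.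
rewrite side_convex_comb // sumr_ge0 // => i _; rewrite mulr_ge0 //.
by case: (Ap i) => [/A_ge0 //|->]; rewrite /side !subrr !mul0r subrr.
Qed.

Lemma interior_side_ge0_le0 O c :
  interior [set x | 0 <= side O c x] `&` interior [set x | side O c x <= 0] = set0.
Proof.
rewrite -interiorI; apply/seteqP; split => // x /nbhs_ballP[e e_gt0 ball_sub].
pose w : 'rV[R]_2 := \row_j (if j == ord0 then - sin c else cos c).
have side_shift t : side O c (x + t *: w) = side O c x + t.
  by rewrite /side /px /py !mxE /= -[t in RHS]mulr1 -(cos2Dsin2 c); ring.
pose t := e / (2 * (`|w| + 1)).
have w_ge0 : 0 <= `|w| by [].
have t_gt0 : 0 < t by rewrite divr_gt0 // mulr_gt0 //; lra.
have tw : t * (`|w| + 1) = e / 2 by rewrite /t; field; lra.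
have x_tw_near : ball x e (x + t *: w).
  rewrite -ball_normE /ball_ /= opprD addrA subrr sub0r normrN normrZ gtr0_norm //.
  nra.
have [/= x_ge0 x_le0] := ball_sub x (ballxx x e_gt0).
have [/= + +] := ball_sub _ x_tw_near; rewrite side_shift; lra.
Qed.

Lemma sector_hulls_disjoint O e A B :
  (forall v, A v -> 0 <= theta O v - e <= pi) ->
  (forall v, B v -> 0 <= theta O v - (e + pi) <= pi) ->
  interior (convex_hull (A `|` [set O])) `&` interior (convex_hull (B `|` [set O]))
  = set0.
Proof.
move=> A_sector B_sector; apply/seteqP; split => // x [xA xB].
rewrite -(interior_side_ge0_le0 O e); split.
  by apply: interiorS xA; apply: convex_hull_side_ge0 => v /A_sector /side_ge0.
apply: interiorS xB => y /(convex_hull_side_ge0 (c := e + pi)) /=.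
by rewrite sideDpi oppr_ge0; apply => v /B_sector /side_ge0.
Qed.

End HalfPlanes.

Lemma interior_exterior_disjoint (T : topologicalType) (X Y : set T) :
  X `<=` Y -> interior X `&` exterior Y = set0.
Proof.
move=> XY; apply/seteqP; split => // x [/interior_subset Xx /interior_subset].
by apply; apply: XY.
Qed.

Section AngularSpread.
Variables (R : realType) (O : 'rV[R]_2).
Implicit Types (A B : seq 'rV[R]_2) (v : 'rV[R]_2).

Lemma le_max_theta B v : v \in B -> theta O v <= max_theta O B.
Proof. by move=> vB; apply: le_bigmax_seq. Qed.

Lemma ge_min_theta B v : v \in B -> min_theta O B <= theta O v.
Proof. by move=> vB; apply: ge_bigmin_seq. Qed.

Lemma le_min_theta B (x : R) :
  x <= 2 * pi -> {in B, forall v, x <= theta O v} -> x <= min_theta O B.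
Proof. by move=> x_le B_ge; rewrite /min_theta big_seq; apply: le_bigmin. Qed.

Lemma min_theta_ge0 B : 0 <= min_theta O B.
Proof.
apply: le_min_theta => [|v _]; last by case/andP: (theta_bounds O v).
by rewrite mulr_ge0 ?pi_ge0.
Qed.

Lemma max_theta_le2pi B : max_theta O B <= 2 * pi.
Proof.
apply: bigmax_le => [|v _]; last by case/andP: (theta_bounds O v).
by rewrite mulr_ge0 ?pi_ge0.
Qed.

Lemma max_theta_le_min_theta A B :
  {in A & B, forall u v, theta O u <= theta O v} -> max_theta O A <= min_theta O B.
Proof.
move=> AB; rewrite /max_theta big_seq; apply: bigmax_le => [|u uA].
  exact: min_theta_ge0.
by apply: le_min_theta => [|v vB]; [case/andP: (theta_bounds O u) | apply: AB].
Qed.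

Lemma ordered_spread_le_pi A B : {in A & B, forall u v, theta O u <= theta O v} ->
  max_theta O A - min_theta O A <= pi \/ max_theta O B - min_theta O B <= pi.
Proof.
move=> AB; have := max_theta_le_min_theta AB.
have := min_theta_ge0 A; have := max_theta_le2pi B.
by case: (lerP (max_theta O A - min_theta O A) pi) => [? _ _ _|*]; [left | right; lra].
Qed.

Lemma ordered_small_hulls_disjoint A B :
  {in A & B, forall u v, theta O u <= theta O v} ->
  max_theta O A - min_theta O A <= pi -> max_theta O B - min_theta O B <= pi ->
  interior (convex_hull ([set v | v \in A] `|` [set O])) `&`
  interior (convex_hull ([set v | v \in B] `|` [set O])) = set0.
Proof.
move=> AB; set a := min_theta O A; set c := min_theta O B => A_small B_small.
have a_ge0 : 0 <= a := min_theta_ge0 A.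
have A_sector v : v \in A -> [/\ a <= theta O v, theta O v <= a + pi & theta O v <= c].
  move=> vA; have := le_max_theta vA; split; [exact: ge_min_theta | lra |].
  by apply: le_min_theta => [|w wB]; [case/andP: (theta_bounds O v) | apply: AB].
have B_sector v : v \in B -> [/\ c <= theta O v, theta O v <= c + pi & theta O v <= 2 * pi].
  move=> vB; have := le_max_theta vB; split; [exact: ge_min_theta | lra |].
  by case/andP: (theta_bounds O v).
(* If the two sectors start less than pi apart, the line at angle c - pi
   separates them; otherwise the line at angle a does. *)
have [ca_le|ca_gt] := lerP (c - a) pi.
  apply: (sector_hulls_disjoint (e := c - pi)) => v.
    by move=> /A_sector[*]; apply/andP; split; lra.
  by move=> /B_sector[*]; apply/andP; split; lra.
apply: (sector_hulls_disjoint (e := a)) => v.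
  by move=> /A_sector[*]; apply/andP; split; lra.
by move=> /B_sector[*]; apply/andP; split; lra.
Qed.

End AngularSpread.

Section Blocks.
Variables (T : eqType) (d : nat) (s : seq T).

Lemma mem_block i x : x \in block d i s -> x \in s.
Proof. by move=> /mem_take /mem_drop. Qed.

Lemma block_sub_take i : (0 < i)%N -> {subset block d i s <= take (i * d) s}.
Proof.
move=> i_gt0 x; rewrite /block.
have -> : (i * d = (i - 1) * d + d)%N by rewrite -mulSnr; congr (_ * _)%N; lia.
by rewrite takeD mem_cat => ->; rewrite orbT.
Qed.

Lemma block_sub_drop i j : (i < j)%N -> {subset block d j s <= drop (i * d) s}.
Proof.
move=> ij x /mem_take.
have -> : ((j - 1) * d = ((j - 1) * d - i * d) + i * d)%N.
  by rewrite subnK //; apply: leq_mul => //; lia.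
by rewrite -drop_drop => /mem_drop.
Qed.

Lemma sorted_blocks_rel (r : rel T) i j : transitive r -> sorted r s ->
  (0 < i)%N -> (i < j)%N -> {in block d i s & block d j s, forall u v, r u v}.
Proof.
move=> r_tr s_sorted i_gt0 ij u v /(block_sub_take i_gt0) u_take /(block_sub_drop ij) v_drop.
move: s_sorted; rewrite (sorted_pairwise r_tr) -(cat_take_drop (i * d) s) pairwise_cat.
by case/and3P => /allrelP take_drop_r _ _; apply: take_drop_r.
Qed.

Lemma uniq_block_disjoint i j x : uniq s -> (0 < i)%N -> (i < j)%N ->
  x \in block d i s -> x \notin block d j s.
Proof.
move=> s_uniq i_gt0 ij /(block_sub_take i_gt0) x_take; apply/negP => /(block_sub_drop ij).
move: s_uniq; rewrite -{1}(cat_take_drop (i * d) s) cat_uniq => /and3P[_ /hasPn x_notin _].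
by move=> x_drop; move: (x_notin x x_drop) => /=; rewrite x_take.
Qed.

End Blocks.

Theorem lemma12 (R : realType) (V : seq 'rV[R]_2) (O : 'rV[R]_2) (M k : nat)
  (s : seq 'rV[R]_2) :
  uniq V -> (0 < M)%N -> (0 < k)%N ->
  perm_eq s V -> sorted (fun a b => theta O a <= theta O b) s ->
  forall i j : nat, (1 <= i)%N -> (i < j)%N ->
    (j <= (size V + M * k - 1) %/ (M * k))%N ->
    Yset O s (M * k) i `&` Yset O s (M * k) j = set0.
Proof.
move=> V_uniq _ _ sV s_sorted i j i_gt0 ij _.
set d := (M * k)%N; set Vi := block d i s; set Vj := block d j s.
have s_uniq : uniq s by rewrite (perm_uniq sV).
have ordered : {in Vi & Vj, forall u v, theta O u <= theta O v}.
  by apply: sorted_blocks_rel => // ? ? ?; apply: le_trans.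
have Vi_Vj u : u \in Vi -> u \notin Vj by apply: uniq_block_disjoint.
rewrite /Yset -/Vi -/Vj; case: ifP => Vi_small; case: ifP => Vj_small.
- exact: ordered_small_hulls_disjoint.
- apply/interior_exterior_disjoint/convex_hullS/setSU => u /= uVi.
  by split; [apply: mem_block uVi | apply/negP/Vi_Vj].
- rewrite setIC; apply/interior_exterior_disjoint/convex_hullS/setSU => u /= uVj.
  by split; [apply: mem_block uVj | move/Vi_Vj; rewrite uVj].
- by case: (ordered_spread_le_pi ordered); rewrite ?Vi_small ?Vj_small.
Qed.
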